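(* Consider the Byzantine-resilient state estimation algorithm described in the context, run on a complete communication graph on $n$ agents with trimming parameter $b$, where $n>2b$, and let ${\mathcal{A}}$ be the set of Byzantine agents with $|{\mathcal{A}}|\le b$ and $\phi=|{\mathcal{V}}\setminus{\mathcal{A}}|$. Then for each iteration $t\ge 1$, each good agent $i\in{\mathcal{V}}\setminus{\mathcal{A}}$ and each coordinate $k\in\{1,\dots,d\}$, there exist coefficients $(\beta_{ij}^k(t))_{j\in{\mathcal{V}}\setminus{\mathcal{A}}}$ such that (i) $x_i^k(t)=\sum_{j\in{\mathcal{V}}\setminus{\mathcal{A}}}\beta_{ij}^k(t)\,\langle z_j(t),e_k\rangle$; and (ii) $0\le \beta_{ij}^k(t)\le \frac{1}{\phi-b}$ for all $j\in{\mathcal{V}}\setminus{\mathcal{A}}$, and $\sum_{j\in{\mathcal{V}}\setminus{\mathcal{A}}}\beta_{ij}^k(t)=1$.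
   Context: Agents ${\mathcal{V}}=\{1,\dots,n\}$ communicate over a directed graph $G=({\mathcal{V}},{\mathcal{E}})$; ${\mathcal{N}}_i$ denotes the set of incoming neighbors of $i$ (here $G$ is complete, so ${\mathcal{N}}_i\cup\{i\}={\mathcal{V}}$). There is an unknown vector $\theta^*\in\mathbb{R}^d$. Agent $i$ has a matrix $H_i\in\mathbb{R}^{n_i\times d}$ and at each time $t=1,2,\dots$ obtains $y_i(t)=H_i\theta^*+w_i(t)$. An unknown set ${\mathcal{A}}\subseteq{\mathcal{V}}$ of Byzantine agents with $|{\mathcal{A}}|\le b$ is chosen by an adversary; $b$ is known to all agents. Byzantine agents may send arbitrary vectors, possibly different vectors to different recipients. $e_k$ is the $k$-th standard basis vector of $\mathbb{R}^d$. Algorithm (run by each good agent $i\in{\mathcal{V}}\setminus{\mathcal{A}}$): $x_i(0)\in\mathbb{R}^d$ is arbitrary. At iteration $t\ge1$: compute $z_i(t)=x_i(t-1)-H_i^\top\big(H_i x_i(t-1)-\frac1t\sum_{r=1}^t y_i(r)\big)$; send $z_i(t)$ to all out-neighbors; agent $i$ receives $m_{ji}(t)\in\mathbb{R}^d$ from each $j\in{\mathcal{N}}_i$, where $m_{ji}(t)=z_j(t)$ if $j\notin{\mathcal{A}}$ and $m_{ji}(t)$ is arbitrary if $j\in{\mathcal{A}}$, and sets $m_{ii}(t)=z_i(t)$. For each $k=1,\dots,d$: sort the values $\langle m_{ji}(t),e_k\rangle$, $j\in{\mathcal{N}}_i\cup\{i\}$, in non-decreasing order, remove the $b$ largest and the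 $b$ smallest values, let ${\mathcal{R}}_i^k(t)$ be the set of indices of the remaining values, and set $x_i^k(t)=\frac{1}{|{\mathcal{R}}_i^k(t)|}\sum_{j\in{\mathcal{R}}_i^k(t)}\langle m_{ji}(t),e_k\rangle$. Then $x_i(t)=(x_i^1(t),\dots,x_i^d(t))^\top$. *)

From HB Require Import structures.
From mathcomp Require Import all_boot all_order all_algebra.
Set Implicit Arguments. Unset Strict Implicit. Unset Printing Implicit Defensive.
Import Order.TTheory GRing.Theory Num.Theory.
Local Open Scope ring_scope.

Definition trimmed_mean (R : realFieldType) (b : nat) (s : seq R) : R :=
  let s' := drop b (take (size s - b)%N (sort (fun x y : R => x <= y) s)) in
  (\sum_(v <- s') v) / (size s')%:R.

Section Algo.
Variables (R : realFieldType) (n d : nat) (ni : 'I_n -> nat)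
  (H : forall i : 'I_n, 'M[R]_(ni i, d))
  (theta : 'cV[R]_d)
  (w : forall i : 'I_n, nat -> 'cV[R]_(ni i))
  (b : nat)
  (A : {set 'I_n})
  (adv : nat -> 'I_n -> 'I_n -> 'cV[R]_d)       (* adv t j i : message of j to i at t *)
  (x0 : 'I_n -> 'cV[R]_d).

Definition obs (i : 'I_n) (t : nat) : 'cV[R]_(ni i) := H i *m theta + w i t.

Definition zstep (xprev : 'I_n -> 'cV[R]_d) (t : nat) (i : 'I_n) : 'cV[R]_d :=
  xprev i - (H i)^T *m (H i *m xprev i - (t%:R)^-1 *: \sum_(1 <= r < t.+1) obs i r).

Definition msg (xprev : 'I_n -> 'cV[R]_d) (t : nat) (j i : 'I_n) : 'cV[R]_d :=
  if (j \in A) && (j != i) then adv t j i else zstep xprev t j.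

(* x(t) for all agents (values at Byzantine agents are irrelevant) *)
Fixpoint xstate (t : nat) : 'I_n -> 'cV[R]_d :=
  match t with
  | 0 => x0
  | t'.+1 => fun i =>
      \col_(k < d) trimmed_mean b [seq msg (xstate t') t'.+1 j i k 0 | j <- enum 'I_n]
  end.

(* z_j(t) for t >= 1 *)
Definition zstate (t : nat) (j : 'I_n) : 'cV[R]_d := zstep (xstate t.-1) t j.

End Algo.

From mathcomp Require Import all_boot all_order all_algebra.
Import Order.TTheory GRing.Theory Num.Theory.
From mathcomp Require Import ring lra zify.
Set Implicit Arguments.
Unset Strict Implicit.
Unset Printing Implicit Defensive.
Local Open Scope ring_scope.

(* After sorting, the trimmed mean is the average of the values over the kept
   middle block K of n - 2b indices.  Of the n - b lowest indices at least
   n - b - |A| = phi - b are good, and each value below K is at most every value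
   in K, so the average over these good indices is at most the average over K;
   symmetrically, the good indices among the n - b highest average at least as
   much.  Hence the trimmed mean is a convex combination of two uniform averages,
   each over at least phi - b good agents, which yields weights in
   [0, 1/(phi - b)] summing to 1. *)

Section TakeDrop.
Variable T : eqType.

Lemma mem_take_notin_drop (s : seq T) m x :
  x \in s -> x \notin drop m s -> x \in take m s.
Proof. by rewrite -{1}(cat_take_drop m s) mem_cat => /orP[// | ->]. Qed.

Lemma mem_drop_notin_take (s : seq T) m x :
  x \in s -> x \notin take m s -> x \in drop m s.
Proof. by rewrite -{1}(cat_take_drop m s) mem_cat => /orP[-> | //]. Qed.

Lemma pairwise_take_drop (r : rel T) (s : seq T) m :
  pairwise r s -> {in take m s & drop m s, forall x y, r x y}.
Proof. by rewrite -{1}(cat_take_drop m s) pairwise_cat => /andP[/allrelP]. Qed.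

End TakeDrop.

Lemma card_set_uniq (I : finType) (s : seq I) : uniq s -> #|[set j in s]| = size s.
Proof. by rewrite cardsE => /card_uniqP. Qed.

Section Means.
Variables (R : realFieldType) (I : finType).

Lemma convex_comb_of_between (lo mu hi : R) :
  lo <= mu -> mu <= hi -> exists2 lam, 0 <= lam <= 1 & mu = lam * lo + (1 - lam) * hi.
Proof.
move=> lo_mu mu_hi; have [hi_lo | lo_hi] := leP hi lo.
  exists 1; first by rewrite lexx ler01.
  by rewrite subrr mul0r addr0 mul1r; apply/le_anti; rewrite lo_mu (le_trans mu_hi).
have gap_gt0 : 0 < hi - lo by rewrite subr_gt0.
exists ((hi - mu) / (hi - lo)); last by field; rewrite gt_eqF.
by rewrite divr_ge0 ?subr_ge0 ?(le_trans lo_mu) //= ler_pdivrMr // mul1r lerD2l lerN2.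
Qed.

Definition mean (S : {set I}) (f : I -> R) : R := (\sum_(j in S) f j) / #|S|%:R.

Lemma mean_le_mean_of_below (S K : {set I}) (f : I -> R) :
  (0 < #|K|)%N -> (#|K| <= #|S|)%N ->
  {in S :\: K & K, forall x y, f x <= f y} -> mean S f <= mean K f.
Proof.
move=> K_gt0 KS fSK; have /card_gt0P[k0 k0K] := K_gt0.
have [c cK c_min] := arg_minP f k0K.
rewrite /mean ler_pdivrMr ?ltr0n ?(leq_trans K_gt0) // mulrAC ler_pdivlMr ?ltr0n //.
rewrite (big_setID K) [X in _ <= X * _](big_setID S) /= [K :&: S]setIC.
move: KS; rewrite -(cardsID K S) -(cardsID S K) [K :&: S]setIC leq_add2l.
set X := \sum_(j in S :&: K) f j; set Y := \sum_(j in K :\: S) f j.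
set Z := \sum_(j in S :\: K) f j.
have hX : #|S :&: K|%:R * f c <= X.
  by rewrite mulr_natl -sumr_const; apply: ler_sum => j /setIP[_ /c_min].
have hY : #|K :\: S|%:R * f c <= Y.
  by rewrite mulr_natl -sumr_const; apply: ler_sum => j /setDP[/c_min].
have hZ : Z <= #|S :\: K|%:R * f c.
  by rewrite mulr_natl -sumr_const; apply: ler_sum => j jSK; exact: fSK.
move: #|S :&: K| #|K :\: S| #|S :\: K| hX hY hZ => r m s hX hY hZ.
rewrite -(ler_nat R) => ms.
(* The difference of the two sides is exactly h1 + h2 + h3. *)
have h1 : 0 <= (s%:R - m%:R) * (X - r%:R * f c) by rewrite mulr_ge0 ?subr_ge0.
have h2 : 0 <= (r + s)%:R * (Y - m%:R * f c) by rewrite mulr_ge0 ?subr_ge0.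
have h3 : 0 <= (r + m)%:R * (s%:R * f c - Z) by rewrite mulr_ge0 ?subr_ge0.
rewrite !natrD in h2 h3 *; nra.
Qed.

Lemma mean_opp (S : {set I}) (f : I -> R) : mean S (fun j => - f j) = - mean S f.
Proof. by rewrite /mean sumrN mulNr. Qed.

Lemma mean_le_mean_of_above (S K : {set I}) (f : I -> R) :
  (0 < #|K|)%N -> (#|K| <= #|S|)%N ->
  {in K & S :\: K, forall x y, f x <= f y} -> mean K f <= mean S f.
Proof.
move=> K_gt0 KS fKS; rewrite -lerN2 -!mean_opp.
by apply: mean_le_mean_of_below => // x y xS yK; rewrite lerN2 fKS.
Qed.

Definition unif_weight (S : {set I}) (j : I) : R := if j \in S then #|S|%:R^-1 else 0.

Lemma sum_unif_weight_mul (G S : {set I}) (f : I -> R) :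
  S \subset G -> \sum_(j in G) unif_weight S j * f j = mean S f.
Proof.
move=> /setIidPr GS; rewrite /mean mulr_suml (big_setID S) /= GS.
rewrite [X in _ + X]big1 => [|j /setDP[_ /negbTE jS]]; last first.
  by rewrite /unif_weight jS mul0r.
by rewrite addr0; apply: eq_bigr => j jS; rewrite /unif_weight jS mulrC.
Qed.

Lemma sum_unif_weight (G S : {set I}) :
  S \subset G -> (0 < #|S|)%N -> \sum_(j in G) unif_weight S j = 1.
Proof.
move=> SG S_gt0; transitivity (mean S (fun=> 1)).
  by rewrite -(sum_unif_weight_mul _ SG); apply: eq_bigr => j _; rewrite mulr1.
by rewrite /mean sumr_const divff // pnatr_eq0 -lt0n.
Qed.

Lemma unif_weight_bounds (S : {set I}) (q : nat) j :
  (0 < q)%N -> (q <= #|S|)%N -> 0 <= unif_weight S j <= q%:R^-1.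
Proof.
move=> q_gt0 qS; rewrite /unif_weight; case: (j \in S).
  by rewrite invr_ge0 ler0n lef_pV2 ?posrE ?ltr0n ?ler_nat ?(leq_trans q_gt0).
by rewrite lexx invr_ge0 ler0n.
Qed.

Lemma convex_weights_of_mean_between (G S1 S2 : {set I}) (q : nat) (f : I -> R) mu :
  S1 \subset G -> S2 \subset G -> (0 < q)%N -> (q <= #|S1|)%N -> (q <= #|S2|)%N ->
  mean S1 f <= mu -> mu <= mean S2 f ->
  exists beta : I -> R, [/\ mu = \sum_(j in G) beta j * f j,
    {in G, forall j, 0 <= beta j <= q%:R^-1} & \sum_(j in G) beta j = 1].
Proof.
move=> S1G S2G q_gt0 qS1 qS2 lo_mu mu_hi.
have [lam /andP[lam_ge0 lam_le1] ->] := convex_comb_of_between lo_mu mu_hi.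
exists (fun j => lam * unif_weight S1 j + (1 - lam) * unif_weight S2 j); split.
- under eq_bigr do rewrite mulrDl -!mulrA.
  by rewrite big_split -!mulr_sumr /= !sum_unif_weight_mul.
- move=> j _; have /andP[w1_ge0 w1_le] := unif_weight_bounds j q_gt0 qS1.
  have /andP[w2_ge0 w2_le] := unif_weight_bounds j q_gt0 qS2.
  apply/andP; split; first by rewrite addr_ge0 ?mulr_ge0 ?subr_ge0.
  have -> : q%:R^-1 = lam * q%:R^-1 + (1 - lam) * q%:R^-1 :> R by ring.
  by rewrite lerD ?ler_wpM2l ?subr_ge0.
- rewrite big_split -!mulr_sumr /= !sum_unif_weight ?(leq_trans q_gt0) //.
  by rewrite !mulr1 addrC subrK.
Qed.

End Means.

Section Trimming.
Variables (R : realFieldType) (I : finType) (b : nat) (f : I -> R).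

Definition sorted_enum : seq I := sort (relpre f <=%R) (enum I).

Definition trim_low : {set I} := [set j in take (#|I| - b) sorted_enum].
Definition trim_keep : {set I} := [set j in drop b (take (#|I| - b) sorted_enum)].
Definition trim_high : {set I} := [set j in drop b sorted_enum].

Lemma size_sorted_enum : size sorted_enum = #|I|.
Proof. by rewrite size_sort cardE. Qed.

Lemma uniq_sorted_enum : uniq sorted_enum.
Proof. by rewrite sort_uniq enum_uniq. Qed.

Lemma pairwise_sorted_enum : pairwise (relpre f <=%R) sorted_enum.
Proof.
rewrite -sorted_pairwise; first exact/sort_sorted/(fun x y => le_total (f x) (f y)).
by move=> y x z /= /le_trans; apply.
Qed.

Lemma card_trim_low : #|trim_low| = (#|I| - b)%N.
Proof.
rewrite card_set_uniq ?take_uniq ?uniq_sorted_enum //.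
by rewrite size_takel // size_sorted_enum leq_subr.
Qed.

Lemma card_trim_high : #|trim_high| = (#|I| - b)%N.
Proof.
by rewrite card_set_uniq ?drop_uniq ?uniq_sorted_enum // size_drop size_sorted_enum.
Qed.

Lemma card_trim_keep : #|trim_keep| = (#|I| - b - b)%N.
Proof.
rewrite card_set_uniq ?drop_uniq ?take_uniq ?uniq_sorted_enum //.
by rewrite size_drop size_takel // size_sorted_enum leq_subr.
Qed.

Lemma trim_keepE : (2 * b <= #|I|)%N ->
  trim_keep = [set j in take (#|I| - b - b) (drop b sorted_enum)].
Proof. by move=> bI; rewrite take_drop subnK //; lia. Qed.

Lemma trim_low_le_keep : {in trim_low :\: trim_keep & trim_keep, forall x y, f x <= f y}.
Proof.
move=> x y /setDP[]; rewrite !inE => xlow xkeep ykeep.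
have := subseq_pairwise (take_subseq _ (#|I| - b)) pairwise_sorted_enum.
by move/(pairwise_take_drop (m := b)); apply; rewrite // mem_take_notin_drop.
Qed.

Lemma trim_keep_le_high : (2 * b <= #|I|)%N ->
  {in trim_keep & trim_high :\: trim_keep, forall x y, f x <= f y}.
Proof.
move=> bI; rewrite trim_keepE // => x y xkeep /setDP[].
rewrite !inE in xkeep * => yhigh ykeep.
have := subseq_pairwise (drop_subseq _ b) pairwise_sorted_enum.
by move/(pairwise_take_drop (m := #|I| - b - b)); apply; rewrite // mem_drop_notin_take.
Qed.

Lemma trimmed_mean_enum : trimmed_mean b (map f (enum I)) = mean trim_keep f.
Proof.
rewrite /trimmed_mean sort_map size_map -cardE -map_take -map_drop big_map size_map.
rewrite /mean card_set_uniq ?drop_uniq ?take_uniq ?uniq_sorted_enum //.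
rewrite big_uniq ?drop_uniq ?take_uniq ?uniq_sorted_enum //.
by congr (_ / _); apply: eq_bigl => j; rewrite inE.
Qed.

End Trimming.

Lemma trimmed_mean_good_weights (R : realFieldType) (I : finType) (b : nat)
    (A : {set I}) (f : I -> R) :
  (2 * b < #|I|)%N -> (#|A| <= b)%N ->
  exists beta : I -> R,
    [/\ trimmed_mean b (map f (enum I)) = \sum_(j in ~: A) beta j * f j,
         {in ~: A, forall j, 0 <= beta j <= (#|~: A| - b)%:R^-1}
       & \sum_(j in ~: A) beta j = 1].
Proof.
move=> bI AB; set q := (#|~: A| - b)%N.
have cardC : #|~: A| = (#|I| - #|A|)%N by rewrite -(cardsC A) addKn.
have card_good (S : {set I}) : #|S| = (#|I| - b)%N -> (q <= #|S :\: A|)%N.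
  by move=> cS; rewrite cardsD cS; have := subset_leq_card (subsetIr S A); lia.
have low_good := card_good _ (card_trim_low b f).
have high_good := card_good _ (card_trim_high b f).
have [keep_gt0 keep_le] : (0 < #|trim_keep b f|)%N /\ (#|trim_keep b f| <= q)%N.
  by rewrite card_trim_keep; lia.
have goodD (S : {set I}) : S :\: A \subset ~: A by rewrite setDE subsetIr.
rewrite trimmed_mean_enum.
apply: (convex_weights_of_mean_between (goodD _) (goodD _) _ low_good high_good).
- exact: leq_trans keep_le.
- apply: mean_le_mean_of_below => //; first exact: leq_trans keep_le low_good.
  move=> x y /setDP[/setDP[xlow _] xK] yK.
  by apply: (trim_low_le_keep (b := b)) => //; apply/setDP.
- apply: mean_le_mean_of_above => //; first exact: leq_trans keep_le high_good.
  move=> x y xK /setDP[/setDP[yhigh _] yK].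
  by apply: (trim_keep_le_high (b := b)) => //; [lia | apply/setDP].
Qed.

Theorem lemma1 (R : realFieldType) (n d : nat) (ni : 'I_n -> nat)
  (H : forall i : 'I_n, 'M[R]_(ni i, d)) (theta : 'cV[R]_d)
  (w : forall i : 'I_n, nat -> 'cV[R]_(ni i)) (b : nat) (A : {set 'I_n})
  (adv : nat -> 'I_n -> 'I_n -> 'cV[R]_d) (x0 : 'I_n -> 'cV[R]_d) :
  (2 * b < n)%N -> (#|A| <= b)%N ->
  forall (t : nat) (i : 'I_n) (k : 'I_d), (1 <= t)%N -> i \notin A ->
  exists beta : 'I_n -> R,
    xstate H theta w b A adv x0 t i k 0
      = \sum_(j | j \notin A) beta j * zstate H theta w b A adv x0 t j k 0
    /\ (forall j, j \notin A ->
          0 <= beta j <= 1 / ((#|~: A|)%:R - b%:R))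
    /\ \sum_(j | j \notin A) beta j = 1.
Proof.
move=> bn AB [//|t] i k _ iA; rewrite /= mxE.
have bI : (2 * b < #|'I_n|)%N by rewrite card_ord.
pose received j := msg H theta w A adv (xstate H theta w b A adv x0 t) t.+1 j i k 0.
have [beta [tmE beta_bnd beta_sum]] := trimmed_mean_good_weights received bI AB.
have b_le_good : (b <= #|~: A|)%N by have := cardsC A; rewrite card_ord; lia.
exists beta; rewrite tmE; split; last split.
- by apply: eq_big => [j | j]; rewrite ?inE // => /negbTE jA; rewrite /received /msg jA.
- by move=> j jA; rewrite div1r -natrB // beta_bnd ?inE.
- by rewrite -beta_sum; apply: eq_bigl => j; rewrite inE.
Qed.
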